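(* Let $U_n\subset C^n([a,b],\mathbb{K})$ ($a<b$) be a subspace of dimension $n+1$ and let $p_{n,0},\dots,p_{n,n}$ be a Bernstein basis of $U_n$ for $\{a,b\}$ which is locally non-negative at $\{a,b\}$. Then there exists $\delta>0$ such that $p_{n,k}'(x)<0$ for all $x\in[b-\delta,b)$ and all $k=0,\dots,n-1$, while $p_{n,k}'(x)>0$ for all $x\in(a,a+\delta]$ and all $k=1,\dots,n$. Consequently, if moreover $f_0\in U_n$ is strictly positive and $D_{f_0}U_n$ has a Bernstein basis $q_{n-1,0},\dots,q_{n-1,n-1}$ for $\{a,b\}$ which is locally non-negative at $\{a,b\}$, then the numbers $$c_k=\frac{1}{f_0(a)}\lim_{x\downarrow a}\frac{p_{n,k}'(x)}{q_{n-1,k-1}(x)}\ (k=1,\dots,n),\qquad d_k=\frac{1}{f_0(b)}\lim_{x\uparrow b}\frac{p_{n,k}'(x)}{q_{n-1,k}(x)}\ (k=0,\dots,n-1)$$ satisfy $c_k>0$ for $k=1,\dots,n$ and $d_k<0$ for $k=0,\dots,n-1$.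
   Context: A function $f\in C^m([a,b],\mathbb{K})$ has a zero of order $k$ at $c$ if $f(c)=\dots=f^{(k-1)}(c)=0$ and $f^{(k)}(c)\ne0$ (one-sided derivatives at endpoints). For an $(m+1)$-dimensional space $V\subset C^m([a,b],\mathbb{K})$, a Bernstein basis for $\{a,b\}$ is a system $p_{m,0},\dots,p_{m,m}$ in $V$ such that each $p_{m,k}$ has a zero of order exactly $k$ at $a$ and of order exactly $m-k$ at $b$. Such a basis is locally non-negative at $\{a,b\}$ if its functions are real-valued and there is $\delta>0$ with $p_{m,k}(x)\ge0$ for all $k$ and all $x\in[a,a+\delta)\cup(b-\delta,b]$. For strictly positive $f_0\in U_n$, $D_{f_0}U_n:=\{\frac{d}{dx}(f/f_0):f\in U_n\}$. (The limits defining $c_k,d_k$ exist and are non-zero.) *)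

From Stdlib Require Import Reals.
From Coquelicot Require Import Complex.
Open Scope R_scope.

Inductive Kfield := KR | KC.

Definition Kt (k : Kfield) : Type := match k with KR => R | KC => C end.

Definition Kzero (k : Kfield) : Kt k :=
  match k return Kt k with KR => 0%R | KC => RtoC 0 end.
Definition Kplus (k : Kfield) : Kt k -> Kt k -> Kt k :=
  match k return Kt k -> Kt k -> Kt k with KR => Rplus | KC => Cplus end.
Definition Kminus (k : Kfield) : Kt k -> Kt k -> Kt k :=
  match k return Kt k -> Kt k -> Kt k with KR => Rminus | KC => Cminus end.
Definition Kmult (k : Kfield) : Kt k -> Kt k -> Kt k :=
  match k return Kt k -> Kt k -> Kt k with KR => Rmult | KC => Cmult end.
Definition Knorm (k : Kfield) : Kt k -> R :=
  match k return Kt k -> R with KR => Rabs | KC => Cmod end.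
Definition KofR (k : Kfield) : R -> Kt k :=
  match k return R -> Kt k with KR => fun r => r | KC => RtoC end.
Definition Kscal (k : Kfield) (r : R) (v : Kt k) : Kt k := Kmult k (KofR k r) v.

Fixpoint Ksum (k : Kfield) (N : nat) (g : nat -> Kt k) : Kt k :=
  match N with
  | O => Kzero k
  | S N' => Kplus k (Ksum k N' g) (g N')
  end.

(* Functions on [a,b] are represented by total functions R -> K; only their
   values on [a,b] matter. *)

(* l is the derivative of f at x relative to [a,b]
   (one-sided at the endpoints). *)
Definition deriv_within (k : Kfield) (a b : R) (f : R -> Kt k) (x : R) (l : Kt k) : Prop :=
  forall eps, 0 < eps -> exists del, 0 < del /\
    forall y, a <= y <= b -> y <> x -> Rabs (y - x) < del ->
      Knorm k (Kminus k (Kscal k (/ (y - x)) (Kminus k (f y) (f x))) l) < eps.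

Definition cont_within (k : Kfield) (a b : R) (f : R -> Kt k) : Prop :=
  forall x, a <= x <= b -> forall eps, 0 < eps -> exists del, 0 < del /\
    forall y, a <= y <= b -> Rabs (y - x) < del ->
      Knorm k (Kminus k (f y) (f x)) < eps.

Definition Cn_tower (k : Kfield) (a b : R) (m : nat) (f : R -> Kt k)
    (D : nat -> R -> Kt k) : Prop :=
  (forall x, a <= x <= b -> D O x = f x) /\
  (forall j, (j < m)%nat -> forall x, a <= x <= b ->
       deriv_within k a b (D j) x (D (S j) x)) /\
  cont_within k a b (D m).

Definition Cn (k : Kfield) (a b : R) (m : nat) (f : R -> Kt k) : Prop :=
  exists D, Cn_tower k a b m f D.

Definition zero_order (k : Kfield) (a b : R) (m : nat) (f : R -> Kt k) (c : R)
    (j : nat) : Prop :=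
  exists D, Cn_tower k a b m f D /\ (j <= m)%nat /\
    (forall i, (i < j)%nat -> D i c = Kzero k) /\ D j c <> Kzero k.

Definition in_sp (k : Kfield) (a b : R) (V : (R -> Kt k) -> Prop) (f : R -> Kt k) : Prop :=
  exists g, V g /\ forall x, a <= x <= b -> f x = g x.

Definition subspace_Cn (k : Kfield) (a b : R) (m : nat) (V : (R -> Kt k) -> Prop) : Prop :=
  (forall f, V f -> Cn k a b m f) /\
  V (fun _ => Kzero k) /\
  (forall (al : Kt k) f g, V f -> V g ->
     V (fun x => Kplus k (Kmult k al (f x)) (g x))).

Definition has_dim (k : Kfield) (a b : R) (V : (R -> Kt k) -> Prop) (N : nat) : Prop :=
  exists e : nat -> R -> Kt k,
    (forall i, (i < N)%nat -> V (e i)) /\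
    (forall f, V f -> exists c : nat -> Kt k, forall x, a <= x <= b ->
        f x = Ksum k N (fun i => Kmult k (c i) (e i x))) /\
    (forall c : nat -> Kt k,
        (forall x, a <= x <= b -> Ksum k N (fun i => Kmult k (c i) (e i x)) = Kzero k) ->
        forall i, (i < N)%nat -> c i = Kzero k).

Definition bernstein_basis (k : Kfield) (a b : R) (m : nat) (V : (R -> Kt k) -> Prop)
    (p : nat -> R -> Kt k) : Prop :=
  forall j, (j <= m)%nat ->
    in_sp k a b V (p j) /\ zero_order k a b m (p j) a j /\
    zero_order k a b m (p j) b (m - j).

(* Real-valued functions pt 0..m (viewed in K via KofR) are non-negative
   near a and near b. *)
Definition locally_nonneg (a b : R) (m : nat) (pt : nat -> R -> R) : Prop :=
  exists del, 0 < del /\ forall j, (j <= m)%nat -> forall x, a <= x <= b ->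
    (x < a + del \/ b - del < x) -> 0 <= pt j x.

Definition Kfam (k : Kfield) (pt : nat -> R -> R) : nat -> R -> Kt k :=
  fun j x => KofR k (pt j x).

(* D_{f0} V = { (f / f0)' : f in V }, f0 = KofR o f0t real valued *)
Definition Dspace (k : Kfield) (a b : R) (V : (R -> Kt k) -> Prop) (f0t : R -> R)
    (h : R -> Kt k) : Prop :=
  exists f, in_sp k a b V f /\ forall x, a <= x <= b ->
    deriv_within k a b (fun y => Kscal k (/ f0t y) (f y)) x (h x).

Definition lim_right_at (a b : R) (g : R -> R) (L : R) : Prop :=
  forall eps, 0 < eps -> exists del, 0 < del /\
    forall x, a < x < a + del -> x <= b -> Rabs (g x - L) < eps.
Definition lim_left_at (a b : R) (g : R -> R) (L : R) : Prop :=
  forall eps, 0 < eps -> exists del, 0 < del /\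
    forall x, b - del < x < b -> a <= x -> Rabs (g x - L) < eps.

From Stdlib Require Import Reals Lra Lia.
From Coquelicot Require Import Complex.
Open Scope R_scope.

(* If a C^m function f has a zero of exact order r at a, repeated use of the
   mean value theorem shows that f, f', ..., f^(r) all have the sign of
   f^(r)(a) just to the right of a.  For p_{n,k}, of order k at a, local
   non-negativity makes this sign positive, so p'_{n,k} > 0 near a if k >= 1.
   The same sign argument applied to f - c g gives the L'Hopital-type limit
   f/g -> f^(r)(a)/g^(r)(a) when f and g have the common order r at a; for
   f = p'_{n,k} and g = q_{n-1,k-1}, both of order k-1, it is a quotient of
   two positive numbers, hence c_k > 0.  The endpoint b reduces to a under
   x |-> -x, which multiplies the i-th derivative by (-1)^i, and this extra
   sign makes p'_{n,k} and d_k negative there. *)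

Definition tends_in (a b x : R) (g : R -> R) (l : R) : Prop :=
  forall eps, 0 < eps -> exists del, 0 < del /\
    forall y, a <= y <= b -> y <> x -> Rabs (y - x) < del -> Rabs (g y - l) < eps.

(* [deriv_within KR] is convertible to [deriv_in]. *)
Definition deriv_in (a b : R) (f : R -> R) (x l : R) : Prop :=
  tends_in a b x (fun y => / (y - x) * (f y - f x)) l.

Definition cont_in (a b : R) (f : R -> R) (x : R) : Prop := tends_in a b x f (f x).

Lemma cont_within_R a b f : cont_within KR a b f -> forall x, a <= x <= b -> cont_in a b f x.
Proof.
  intros H x Hx eps He. destruct (H x Hx eps He) as [d [Hd Hy]].
  exists d. split; [exact Hd|]. intros y Hy1 _ Hy2. exact (Hy y Hy1 Hy2).
Qed.

Lemma tends_in_ext a b x g h l : (forall y, a <= y <= b -> y <> x -> g y = h y) ->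
  tends_in a b x g l -> tends_in a b x h l.
Proof.
  intros E H eps He. destruct (H eps He) as [d [Hd Hy]]. exists d; split; auto.
  intros y Hy1 Hy2 Hy3. rewrite <- E by auto. auto.
Qed.

Lemma tends_in_comb a b x g1 g2 l1 l2 u v :
  tends_in a b x g1 l1 -> tends_in a b x g2 l2 ->
  tends_in a b x (fun y => u * g1 y + v * g2 y) (u * l1 + v * l2).
Proof.
  intros H1 H2 eps He.
  set (M := Rabs u + Rabs v + 1).
  assert (Hu := Rabs_pos u). assert (Hv := Rabs_pos v).
  assert (HM : 0 < eps / M) by (apply Rdiv_lt_0_compat; unfold M; lra).
  destruct (H1 _ HM) as [d1 [Hd1 Hy1]]. destruct (H2 _ HM) as [d2 [Hd2 Hy2]].
  exists (Rmin d1 d2). split; [apply Rmin_pos; auto|]. intros y Hy Hne Hd.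
  specialize (Hy1 y Hy Hne (Rlt_le_trans _ _ _ Hd (Rmin_l _ _))).
  specialize (Hy2 y Hy Hne (Rlt_le_trans _ _ _ Hd (Rmin_r _ _))).
  replace (u * g1 y + v * g2 y - (u * l1 + v * l2))
    with (u * (g1 y - l1) + v * (g2 y - l2)) by ring.
  eapply Rle_lt_trans; [apply Rabs_triang|]. rewrite !Rabs_mult.
  assert (Rabs u * Rabs (g1 y - l1) <= Rabs u * (eps / M)) by (apply Rmult_le_compat_l; lra).
  assert (Rabs v * Rabs (g2 y - l2) <= Rabs v * (eps / M)) by (apply Rmult_le_compat_l; lra).
  assert (M * (eps / M) = eps) by (field; unfold M; lra).
  unfold M in *. nra.
Qed.

Lemma tends_in_scal a b x g l s : tends_in a b x g l -> tends_in a b x (fun y => s * g y) (s * l).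
Proof.
  intros H. replace (s * l) with (s * l + 0 * l) by ring.
  apply (tends_in_ext a b x (fun y => s * g y + 0 * g y)); [intros; ring|].
  apply tends_in_comb; auto.
Qed.

Lemma tends_in_opp a b x g l : tends_in a b x g l -> tends_in (-b) (-a) (-x) (fun y => g (-y)) l.
Proof.
  intros H eps He. destruct (H eps He) as [d [Hd Hy]]. exists d; split; auto.
  intros y Hy1 Hy2 Hy3. apply Hy; [lra|lra|].
  replace (-y - x) with (-(y - -x)) by ring. rewrite Rabs_Ropp; auto.
Qed.

Lemma exists_near_in a b x d : a < b -> a <= x <= b -> 0 < d ->
  exists y, a <= y <= b /\ y <> x /\ Rabs (y - x) < d.
Proof.
  intros Hab Hx Hd. set (h := Rmin d (b - a) / 2).
  assert (Hh : 0 < h /\ h < d /\ h <= (b - a) / 2).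
  { unfold h. pose proof (Rmin_l d (b - a)). pose proof (Rmin_r d (b - a)).
    pose proof (Rmin_pos d (b - a) Hd ltac:(lra)). lra. }
  destruct (Rle_dec x ((a + b) / 2)).
  - exists (x + h). replace (x + h - x) with h by ring. rewrite Rabs_pos_eq; lra.
  - exists (x - h). replace (x - h - x) with (- h) by ring. rewrite Rabs_Ropp, Rabs_pos_eq; lra.
Qed.

Lemma tends_in_unique a b x g l1 l2 : a < b -> a <= x <= b ->
  tends_in a b x g l1 -> tends_in a b x g l2 -> l1 = l2.
Proof.
  intros Hab Hx H1 H2. destruct (Req_dec l1 l2) as [|Hne]; auto. exfalso.
  set (e := Rabs (l1 - l2) / 2).
  assert (He : 0 < e) by (unfold e; apply Rdiv_lt_0_compat; [apply Rabs_pos_lt; lra|lra]).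
  destruct (H1 e He) as [d1 [Hd1 Hy1]]. destruct (H2 e He) as [d2 [Hd2 Hy2]].
  destruct (exists_near_in a b x (Rmin d1 d2) Hab Hx (Rmin_pos _ _ Hd1 Hd2))
    as [y [Hy [Hyx Hd]]].
  specialize (Hy1 y Hy Hyx (Rlt_le_trans _ _ _ Hd (Rmin_l _ _))).
  specialize (Hy2 y Hy Hyx (Rlt_le_trans _ _ _ Hd (Rmin_r _ _))).
  pose proof (Rabs_triang (l1 - g y) (g y - l2)) as T.
  replace (l1 - g y + (g y - l2)) with (l1 - l2) in T by ring.
  rewrite (Rabs_minus_sym l1 (g y)) in T. unfold e in *. lra.
Qed.

Lemma deriv_in_ext a b f g x l : a <= x <= b -> (forall y, a <= y <= b -> f y = g y) ->
  deriv_in a b f x l -> deriv_in a b g x l.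
Proof.
  intros Hx E. apply tends_in_ext. intros y Hy _. rewrite !E; auto.
Qed.

Lemma deriv_in_comb a b f g x lf lg u v : deriv_in a b f x lf -> deriv_in a b g x lg ->
  deriv_in a b (fun y => u * f y + v * g y) x (u * lf + v * lg).
Proof.
  intros Hf Hg.
  apply (tends_in_ext a b x
           (fun y => u * (/ (y - x) * (f y - f x)) + v * (/ (y - x) * (g y - g x)))).
  - intros; ring.
  - apply tends_in_comb; auto.
Qed.

Lemma deriv_in_scal a b f x l s : deriv_in a b f x l -> deriv_in a b (fun y => s * f y) x (s * l).
Proof.
  intros H. apply (tends_in_ext a b x (fun y => s * (/ (y - x) * (f y - f x)))).
  - intros; ring.
  - apply tends_in_scal; auto.
Qed.

Lemma deriv_in_opp a b f x l :
  deriv_in a b f x l -> deriv_in (-b) (-a) (fun y => f (-y)) (-x) (-l).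
Proof.
  intros H. replace (-l) with (-1 * l) by ring.
  apply (tends_in_ext _ _ _ (fun y => -1 * (/ (- y - x) * (f (- y) - f x)))).
  - intros y _ Hy. rewrite Ropp_involutive. field. lra.
  - apply tends_in_scal, (tends_in_opp a b x (fun z => / (z - x) * (f z - f x))), H.
Qed.

Lemma cont_in_opp a b f x : cont_in a b f x -> cont_in (-b) (-a) (fun y => f (-y)) (-x).
Proof.
  intros H. unfold cont_in. rewrite Ropp_involutive. exact (tends_in_opp a b x f (f x) H).
Qed.

Lemma deriv_in_cont_in a b f x l : deriv_in a b f x l -> cont_in a b f x.
Proof.
  intros H eps He. destruct (H 1 Rlt_0_1) as [d [Hd Hy]].
  set (M := Rabs l + 1). assert (HM : 0 < M) by (unfold M; pose proof (Rabs_pos l); lra).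
  exists (Rmin d (eps / M)). split; [apply Rmin_pos; [auto|apply Rdiv_lt_0_compat; lra]|].
  intros y Hy1 Hyx Hd'.
  specialize (Hy y Hy1 Hyx (Rlt_le_trans _ _ _ Hd' (Rmin_l _ _))).
  assert (Hq : Rabs (/ (y - x) * (f y - f x)) <= M).
  { pose proof (Rabs_triang (/ (y - x) * (f y - f x) - l) l) as T.
    replace (/ (y - x) * (f y - f x) - l + l) with (/ (y - x) * (f y - f x)) in T by ring.
    unfold M; lra. }
  replace (f y - f x) with ((y - x) * (/ (y - x) * (f y - f x))) by (field; lra).
  rewrite Rabs_mult.
  apply Rle_lt_trans with (Rabs (y - x) * M); [apply Rmult_le_compat_l; auto; apply Rabs_pos|].
  apply Rlt_le_trans with (eps / M * M); [|right; field; lra].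
  apply Rmult_lt_compat_r; auto. exact (Rlt_le_trans _ _ _ Hd' (Rmin_r _ _)).
Qed.

Lemma Rabs_lt_Rmin_bounds h d p q :
  Rabs h < Rmin d (Rmin p q) -> Rabs h < d /\ - p < h < q.
Proof.
  intros H. pose proof (Rmin_l d (Rmin p q)). pose proof (Rmin_r d (Rmin p q)).
  pose proof (Rmin_l p q). pose proof (Rmin_r p q).
  pose proof (Rabs_def2 h _ H). split; lra.
Qed.

Lemma deriv_in_derivable_pt_lim a b f x l :
  a < x < b -> deriv_in a b f x l -> derivable_pt_lim f x l.
Proof.
  intros Hx H eps He. destruct (H eps He) as [d [Hd Hy]].
  assert (Hp : 0 < Rmin d (Rmin (x - a) (b - x))) by (repeat apply Rmin_pos; lra).
  exists (mkposreal _ Hp). intros h Hh Hha. simpl in Hha.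
  destruct (Rabs_lt_Rmin_bounds _ _ _ _ Hha) as [Hhd Hhx].
  specialize (Hy (x + h) ltac:(lra) ltac:(lra)). replace (x + h - x) with h in Hy by ring.
  replace ((f (x + h) - f x) / h) with (/ h * (f (x + h) - f x)) by (unfold Rdiv; ring).
  auto.
Qed.

(* Freezing a function outside [u,v] turns continuity relative to [u,v]
   into plain continuity, which is what the mean value theorem asks for. *)
Definition clamp (u v x : R) : R := Rmax u (Rmin v x).

Lemma clamp_in u v x : u <= v -> u <= clamp u v x <= v.
Proof. intros. unfold clamp, Rmax, Rmin. repeat destruct Rle_dec; lra. Qed.

Lemma clamp_id u v x : u <= x <= v -> clamp u v x = x.
Proof. intros. unfold clamp, Rmax, Rmin. repeat destruct Rle_dec; lra. Qed.

Lemma clamp_lipschitz u v x y : u <= v -> Rabs (clamp u v y - clamp u v x) <= Rabs (y - x).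
Proof.
  intros. unfold clamp, Rmax, Rmin.
  repeat destruct Rle_dec; unfold Rabs; repeat destruct Rcase_abs; lra.
Qed.

Lemma continuity_pt_clamp a b f u v x : a <= u -> u <= v -> v <= b -> u <= x <= v ->
  cont_in a b f x -> continuity_pt (fun y => f (clamp u v y)) x.
Proof.
  intros Hau Huv Hvb Hx H eps He. destruct (H eps He) as [d [Hd Hy]].
  exists d; split; auto. intros y [_ Hyd]. simpl in *. unfold R_dist in *.
  rewrite (clamp_id u v x) by auto. pose proof (clamp_in u v y Huv).
  destruct (Req_dec (clamp u v y) x) as [->|Hne]; [rewrite Rminus_diag, Rabs_R0; auto|].
  apply Hy; [lra|auto|].
  apply Rle_lt_trans with (Rabs (y - x)); auto.
  rewrite <- (clamp_id u v x) at 1 by auto. apply clamp_lipschitz; auto.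
Qed.

Lemma derivable_pt_lim_clamp f u v y l : u < y < v -> derivable_pt_lim f y l ->
  derivable_pt_lim (fun z => f (clamp u v z)) y l.
Proof.
  intros Hy H eps He. destruct (H eps He) as [d Hd].
  assert (Hp : 0 < Rmin d (Rmin (y - u) (v - y))).
  { repeat apply Rmin_pos; try lra. apply cond_pos. }
  exists (mkposreal _ Hp). intros h Hh Hha. simpl in Hha.
  destruct (Rabs_lt_Rmin_bounds _ _ _ _ Hha) as [Hhd Hhy].
  rewrite !clamp_id by lra. auto.
Qed.

Lemma deriv_in_strict_incr a b g g' c u v : a <= u -> u < v -> v <= b ->
  (forall y, u <= y <= v -> deriv_in a b g y (g' y)) ->
  (forall y, u < y < v -> 0 < c * g' y) -> c * g u < c * g v.
Proof.
  intros Hau Huv Hvb Hd Hp.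
  set (h := fun y => g (clamp u v y)).
  assert (Hder : forall y, u < y < v -> derivable_pt_lim h y (g' y)).
  { intros y Hy. apply derivable_pt_lim_clamp; auto.
    apply (deriv_in_derivable_pt_lim a b); [lra|apply Hd; lra]. }
  assert (pr1 : forall y, u < y < v -> derivable_pt h y)
    by (intros y Hy; exists (g' y); exact (Hder y Hy)).
  assert (pr2 : forall y, u < y < v -> derivable_pt id y) by (intros; apply derivable_pt_id).
  destruct (MVT h id u v pr1 pr2 Huv) as [z [Pz Hz]].
  - intros y Hy. apply (continuity_pt_clamp a b); try lra.
    eapply deriv_in_cont_in. apply Hd; auto.
  - intros y _. apply derivable_continuous_pt, derivable_pt_id.
  - rewrite (derive_pt_eq_0 h z (g' z) (pr1 z Pz) (Hder z Pz)),
      (derive_pt_eq_0 id z 1 (pr2 z Pz) (derivable_pt_lim_id z)) in Hz.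
    unfold h, id in Hz. rewrite !clamp_id in Hz by lra.
    specialize (Hp z Pz). nra.
Qed.

Definition tower (a b : R) (m : nat) (D : nat -> R -> R) : Prop :=
  (forall i, (i < m)%nat -> forall x, a <= x <= b -> deriv_in a b (D i) x (D (S i) x)) /\
  (forall x, a <= x <= b -> cont_in a b (D m) x).

Definition flat_at (D : nat -> R -> R) (c : R) (r : nat) : Prop :=
  forall i, (i < r)%nat -> D i c = 0.

Definition nonneg_near_left (a b : R) (f : R -> R) : Prop :=
  exists d, 0 < d /\ forall x, a < x < a + d -> x <= b -> 0 <= f x.

Definition nonneg_near_right (a b : R) (f : R -> R) : Prop :=
  exists d, 0 < d /\ forall x, b - d < x < b -> a <= x -> 0 <= f x.

Lemma tower_cont_in a b m D i x :
  tower a b m D -> (i <= m)%nat -> a <= x <= b -> cont_in a b (D i) x.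
Proof.
  intros [H1 H2] Hi Hx. destruct (Nat.eq_dec i m) as [->|Hne]; auto.
  eapply deriv_in_cont_in. apply H1; auto; lia.
Qed.

Lemma tower_restrict a b m r D : tower a b m D -> (r <= m)%nat -> tower a b r D.
Proof.
  intros Ht Hr. split.
  - intros i Hi x Hx. apply (proj1 Ht); auto; lia.
  - intros x Hx. apply (tower_cont_in a b m); auto.
Qed.

Lemma tower_shift a b m D : tower a b (S m) D -> tower a b m (fun i => D (S i)).
Proof. intros [H1 H2]. split; auto. intros i Hi x Hx. apply H1; auto; lia. Qed.

Lemma tower_comb a b m F G u v : tower a b m F -> tower a b m G ->
  tower a b m (fun i x => u * F i x + v * G i x).
Proof.
  intros [F1 F2] [G1 G2]. split.
  - intros i Hi x Hx. apply deriv_in_comb; auto.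
  - intros x Hx. apply tends_in_comb; [apply F2|apply G2]; auto.
Qed.

Lemma cont_in_sign_near a b f x : cont_in a b f x -> f x <> 0 ->
  exists del, 0 < del /\ forall y, a <= y <= b -> Rabs (y - x) < del -> 0 < f x * f y.
Proof.
  intros H Hnz. destruct (H (Rabs (f x)) (Rabs_pos_lt _ Hnz)) as [d [Hd Hy]].
  exists d. split; auto. intros y Hy1 Hy2.
  destruct (Req_dec y x) as [->|Hne].
  - pose proof (Rsqr_pos_lt _ Hnz). unfold Rsqr in *. lra.
  - specialize (Hy y Hy1 Hne Hy2). revert Hy. unfold Rabs. repeat destruct Rcase_abs; nra.
Qed.

Lemma tower_sign_near_left a b m D r : a < b -> tower a b m D -> (r <= m)%nat ->
  flat_at D a r -> D r a <> 0 ->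
  exists del, 0 < del /\ del < b - a /\
    forall i, (i <= r)%nat -> forall x, a < x <= a + del -> 0 < D r a * D i x.
Proof.
  intros Hab Ht Hr Hflat Hnz.
  destruct (cont_in_sign_near a b (D r) a (tower_cont_in a b m D r a Ht Hr ltac:(lra)) Hnz)
    as [d0 [Hd0 Hbase]].
  set (del := Rmin d0 (b - a) / 2).
  assert (Hdel : 0 < del /\ del < d0 /\ del < b - a).
  { unfold del. pose proof (Rmin_l d0 (b - a)). pose proof (Rmin_r d0 (b - a)).
    pose proof (Rmin_pos d0 (b - a) Hd0 ltac:(lra)). lra. }
  exists del. split; [lra|split; [lra|]].
  (* descending induction: D i vanishes at a and, by induction, its
     derivative D (S i) has the sign of D r a on (a, a + del] *)
  assert (Hdown : forall t, (t <= r)%nat ->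
            forall x, a < x <= a + del -> 0 < D r a * D (r - t)%nat x).
  { induction t as [|t IH]; intros Ht' x Hx.
    - rewrite Nat.sub_0_r. apply Hbase; [lra|rewrite Rabs_pos_eq; lra].
    - assert (Hinc := deriv_in_strict_incr a b (D (r - S t)%nat) (D (r - t)%nat) (D r a) a x).
      rewrite (Hflat (r - S t)%nat), Rmult_0_r in Hinc by lia.
      apply Hinc; try lra.
      + intros y Hy. replace (r - t)%nat with (S (r - S t)) by lia.
        apply (proj1 Ht); [lia|lra].
      + intros y Hy. apply IH; [lia|lra]. }
  intros i Hi x Hx. replace i with (r - (r - i))%nat by lia. apply Hdown; auto; lia.
Qed.

Lemma tower_lead_pos_left a b m D r : a < b -> tower a b m D -> (r <= m)%nat ->
  flat_at D a r -> D r a <> 0 -> nonneg_near_left a b (D O) -> 0 < D r a.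
Proof.
  intros Hab Ht Hr Hflat Hnz [d0 [Hd0 Hnn]].
  destruct (tower_sign_near_left a b m D r Hab Ht Hr Hflat Hnz) as [d [Hd [Hdb S]]].
  set (x := a + Rmin d (d0 / 2)).
  assert (Hx : a < x <= a + d /\ x < a + d0).
  { unfold x. pose proof (Rmin_l d (d0 / 2)). pose proof (Rmin_r d (d0 / 2)).
    pose proof (Rmin_pos d (d0 / 2) Hd ltac:(lra)). lra. }
  specialize (S O (Nat.le_0_l r) x ltac:(lra)).
  specialize (Hnn x ltac:(lra) ltac:(lra)). nra.
Qed.

Lemma tower_pos_near_left a b m D r : a < b -> tower a b m D -> (r <= m)%nat ->
  flat_at D a r -> D r a <> 0 -> nonneg_near_left a b (D O) ->
  exists del, 0 < del /\ forall i, (i <= r)%nat -> forall x, a < x <= a + del -> 0 < D i x.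
Proof.
  intros Hab Ht Hr Hflat Hnz Hnn.
  assert (Hpos := tower_lead_pos_left a b m D r Hab Ht Hr Hflat Hnz Hnn).
  destruct (tower_sign_near_left a b m D r Hab Ht Hr Hflat Hnz) as [d [Hd [_ S]]].
  exists d. split; auto. intros i Hi x Hx. specialize (S i Hi x Hx). nra.
Qed.

Lemma ratio_side_near_left a b r F G c : a < b -> tower a b r F -> tower a b r G ->
  flat_at F a r -> flat_at G a r -> G r a <> 0 -> c <> F r a / G r a ->
  exists del, 0 < del /\
    forall x, a < x <= a + del -> 0 < (F r a / G r a - c) * (F O x / G O x - c).
Proof.
  intros Hab HF HG F0 G0 Gnz Hc.
  set (H := fun i x => 1 * F i x + - c * G i x).
  assert (HH : tower a b r H) by (apply tower_comb; auto).
  assert (H0 : flat_at H a r) by (intros i Hi; unfold H; rewrite F0, G0 by auto; ring).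
  assert (EH : H r a = G r a * (F r a / G r a - c)) by (unfold H; field; auto).
  assert (Hnz : H r a <> 0).
  { rewrite EH. apply Rmult_integral_contrapositive. split; [auto|lra]. }
  destruct (tower_sign_near_left a b r H r Hab HH (le_n r) H0 Hnz) as [d1 [Hd1 [_ S1]]].
  destruct (tower_sign_near_left a b r G r Hab HG (le_n r) G0 Gnz) as [d2 [Hd2 [_ S2]]].
  exists (Rmin d1 d2). split; [apply Rmin_pos; auto|]. intros x Hx.
  pose proof (Rmin_l d1 d2). pose proof (Rmin_r d1 d2).
  specialize (S1 O (Nat.le_0_l r) x ltac:(lra)). specialize (S2 O (Nat.le_0_l r) x ltac:(lra)).
  rewrite EH in S1. unfold H in S1.
  assert (Gx : G O x <> 0) by (intro Z; rewrite Z in S2; lra).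
  replace ((F r a / G r a - c) * (F O x / G O x - c)) with
    (G r a * (F r a / G r a - c) * (1 * F O x + - c * G O x) / (G r a * G O x))
    by (field; auto).
  apply Rdiv_lt_0_compat; auto.
Qed.

Lemma tower_ratio_lim_left a b mF mG F G r : a < b -> tower a b mF F -> tower a b mG G ->
  (r <= mF)%nat -> (r <= mG)%nat -> flat_at F a r -> flat_at G a r -> G r a <> 0 ->
  lim_right_at a b (fun x => F O x / G O x) (F r a / G r a).
Proof.
  intros Hab HF HG HrF HrG F0 G0 Gnz eps He.
  apply (tower_restrict _ _ _ r) in HF, HG; auto.
  set (L := F r a / G r a).
  destruct (ratio_side_near_left a b r F G (L + eps / 2) Hab HF HG F0 G0 Gnz)
    as [d1 [Hd1 S1]]; [unfold L; lra|].
  destruct (ratio_side_near_left a b r F G (L - eps / 2) Hab HF HG F0 G0 Gnz)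
    as [d2 [Hd2 S2]]; [unfold L; lra|].
  exists (Rmin d1 d2). split; [apply Rmin_pos; auto|]. intros x Hx _.
  pose proof (Rmin_l d1 d2). pose proof (Rmin_r d1 d2).
  specialize (S1 x ltac:(lra)). specialize (S2 x ltac:(lra)). fold L in S1, S2.
  apply Rabs_def1; nra.
Qed.

Definition mirror (D : nat -> R -> R) : nat -> R -> R := fun i y => (-1) ^ i * D i (- y).

Lemma tower_mirror a b m D : tower a b m D -> tower (-b) (-a) m (mirror D).
Proof.
  intros [H1 H2]. split.
  - intros i Hi y Hy. unfold mirror.
    assert (H := deriv_in_opp a b (D i) (-y) _ (H1 i Hi (-y) ltac:(lra))).
    rewrite Ropp_involutive in H.
    replace ((-1) ^ S i * D (S i) (- y)) with ((-1) ^ i * - D (S i) (- y)) by (simpl; ring).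
    apply deriv_in_scal; auto.
  - intros y Hy. unfold mirror. apply tends_in_scal.
    assert (H := cont_in_opp a b (D m) (-y) (H2 (-y) ltac:(lra))).
    rewrite Ropp_involutive in H. exact H.
Qed.

Lemma flat_at_mirror D c r : flat_at D c r -> flat_at (mirror D) (- c) r.
Proof. intros H i Hi. unfold mirror. rewrite Ropp_involutive, H by auto. ring. Qed.

Lemma mirror_neq0 D c r : D r c <> 0 -> mirror D r (- c) <> 0.
Proof.
  intros H. unfold mirror. rewrite Ropp_involutive.
  apply Rmult_integral_contrapositive. split; [apply pow_nonzero; lra|auto].
Qed.

Lemma nonneg_near_mirror a b D :
  nonneg_near_right a b (D O) -> nonneg_near_left (-b) (-a) (mirror D O).
Proof.
  intros [d [Hd H]]. exists d. split; auto. intros x Hx Hxa.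
  unfold mirror. rewrite pow_O, Rmult_1_l. apply H; lra.
Qed.

Lemma tower_lead_pos_right a b m D r : a < b -> tower a b m D -> (r <= m)%nat ->
  flat_at D b r -> D r b <> 0 -> nonneg_near_right a b (D O) -> 0 < (-1) ^ r * D r b.
Proof.
  intros Hab Ht Hr Hflat Hnz Hnn.
  pose proof (tower_lead_pos_left (-b) (-a) m (mirror D) r ltac:(lra) (tower_mirror a b m D Ht)
                Hr (flat_at_mirror D b r Hflat) (mirror_neq0 D b r Hnz)
                (nonneg_near_mirror a b D Hnn)) as H.
  unfold mirror in H. rewrite Ropp_involutive in H. exact H.
Qed.

Lemma tower_pos_near_right a b m D r : a < b -> tower a b m D -> (r <= m)%nat ->
  flat_at D b r -> D r b <> 0 -> nonneg_near_right a b (D O) ->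
  exists del, 0 < del /\
    forall i, (i <= r)%nat -> forall x, b - del <= x < b -> 0 < (-1) ^ i * D i x.
Proof.
  intros Hab Ht Hr Hflat Hnz Hnn.
  destruct (tower_pos_near_left (-b) (-a) m (mirror D) r ltac:(lra) (tower_mirror a b m D Ht)
              Hr (flat_at_mirror D b r Hflat) (mirror_neq0 D b r Hnz)
              (nonneg_near_mirror a b D Hnn)) as [d [Hd S]].
  exists d. split; auto. intros i Hi x Hx.
  specialize (S i Hi (-x) ltac:(lra)). unfold mirror in S. rewrite Ropp_involutive in S. exact S.
Qed.

Lemma tower_ratio_lim_right a b mF mG F G r : a < b -> tower a b mF F -> tower a b mG G ->
  (r <= mF)%nat -> (r <= mG)%nat -> flat_at F b r -> flat_at G b r -> G r b <> 0 ->
  lim_left_at a b (fun x => F O x / G O x) (F r b / G r b).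
Proof.
  intros Hab HF HG HrF HrG F0 G0 Gnz.
  pose proof (tower_ratio_lim_left (-b) (-a) mF mG (mirror F) (mirror G) r ltac:(lra)
                (tower_mirror a b mF F HF) (tower_mirror a b mG G HG) HrF HrG
                (flat_at_mirror F b r F0) (flat_at_mirror G b r G0) (mirror_neq0 G b r Gnz)) as L.
  assert (Hs : (-1) ^ r <> 0) by (apply pow_nonzero; lra).
  unfold mirror in L. rewrite !Ropp_involutive in L.
  replace ((-1) ^ r * F r b / ((-1) ^ r * G r b)) with (F r b / G r b) in L by (field; auto).
  intros eps He. destruct (L eps He) as [d [Hd Hy]].
  exists d; split; auto. intros x Hx Hxa.
  specialize (Hy (-x) ltac:(lra) ltac:(lra)). simpl in Hy.
  rewrite !Rmult_1_l, !Ropp_involutive in Hy. exact Hy.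
Qed.

Lemma Rabs_snd_le_Cmod (z : C) : Rabs (snd z) <= Cmod z.
Proof. eapply Rle_trans; [apply Rmax_r|apply Rmax_Cmod]. Qed.

Lemma deriv_within_C_parts a b (f : R -> C) x l : deriv_within KC a b f x l ->
  deriv_in a b (fun y => fst (f y)) x (fst l) /\ deriv_in a b (fun y => snd (f y)) x (snd l).
Proof.
  intros H. split; intros eps He; destruct (H eps He) as [d [Hd Hy]];
    exists d; (split; [exact Hd|]); intros y Hy1 Hy2 Hy3;
    eapply Rle_lt_trans; try exact (Hy y Hy1 Hy2 Hy3); simpl; destruct (f y), (f x), l.
  - eapply Rle_trans; [|apply re_le_Cmod]. unfold Re. simpl. right. f_equal. ring.
  - eapply Rle_trans; [|apply Rabs_snd_le_Cmod]. simpl. right. f_equal. ring.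
Qed.

Lemma cont_within_C_re a b (f : R -> C) :
  cont_within KC a b f -> forall x, a <= x <= b -> cont_in a b (fun y => fst (f y)) x.
Proof.
  intros H x Hx eps He. destruct (H x Hx eps He) as [d [Hd Hy]]. exists d; split; auto.
  intros y Hy1 _ Hy2. eapply Rle_lt_trans; [|exact (Hy y Hy1 Hy2)].
  simpl. destruct (f y), (f x). eapply Rle_trans; [|apply re_le_Cmod]. right. reflexivity.
Qed.

(* A complex tower of a real function is real: its imaginary parts have
   derivative 0 by induction, and derivatives are unique. *)
Lemma Cn_tower_real a b m (p : R -> R) (D : nat -> R -> C) : a < b ->
  Cn_tower KC a b m (fun x => RtoC (p x)) D ->
  tower a b m (fun i x => fst (D i x)) /\
  forall i, (i <= m)%nat -> forall x, a <= x <= b -> snd (D i x) = 0.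
Proof.
  intros Hab [T0 [T1 T2]]. split; [split|].
  - intros i Hi x Hx. exact (proj1 (deriv_within_C_parts a b _ x _ (T1 i Hi x Hx))).
  - exact (cont_within_C_re a b _ T2).
  - induction i as [|i IH]; intros Hi x Hx.
    + rewrite T0 by auto. reflexivity.
    + apply (tends_in_unique a b x (fun y => / (y - x) * (snd (D i y) - snd (D i x)))); auto.
      * exact (proj2 (deriv_within_C_parts a b _ x _ (T1 i ltac:(lia) x Hx))).
      * apply (tends_in_ext a b x (fun _ => 0)).
        { intros y Hy _. rewrite !IH by (auto; lia). ring. }
        intros eps He. exists 1. split; [lra|]. intros. rewrite Rminus_0_r, Rabs_R0; auto.
Qed.

Lemma tower_of_zero_order k a b m (p : R -> R) c j : a < b -> a <= c <= b ->
  zero_order k a b m (fun x => KofR k (p x)) c j ->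
  exists D, tower a b m D /\ (forall x, a <= x <= b -> D O x = p x) /\
    flat_at D c j /\ D j c <> 0.
Proof.
  intros Hab Hc [D [HD [Hj [Hz Hnz]]]]. destruct k.
  - destruct HD as [T0 [T1 T2]]. exists D. split; [split|auto].
    + intros i Hi x Hx. apply T1; auto.
    + exact (cont_within_R a b _ T2).
  - destruct (Cn_tower_real a b m p D Hab HD) as [T Him].
    exists (fun i x => fst (D i x)). split; [exact T|split; [|split]].
    + intros x Hx. rewrite (proj1 HD) by auto. reflexivity.
    + intros i Hi. simpl. rewrite Hz by auto. reflexivity.
    + intro Z. apply Hnz. pose proof (Him j Hj c Hc).
      destruct (D j c). simpl in *. subst. reflexivity.
Qed.

Lemma deriv_within_tower a b m D (p : R -> R) x d : a < b -> (0 < m)%nat -> tower a b m D ->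
  (forall y, a <= y <= b -> D O y = p y) -> a <= x <= b ->
  deriv_within KR a b p x d -> d = D 1%nat x.
Proof.
  intros Hab Hm Ht E Hx Hd.
  apply (tends_in_unique a b x (fun y => / (y - x) * (p y - p x))); auto.
  apply (deriv_in_ext a b (D O)); auto. apply (proj1 Ht); auto.
Qed.

Lemma uniform_radius (N : nat) (P : nat -> R -> Prop) :
  (forall j d d', 0 < d' <= d -> P j d -> P j d') ->
  (forall j, (j < N)%nat -> exists d, 0 < d /\ P j d) ->
  exists d, 0 < d /\ forall j, (j < N)%nat -> P j d.
Proof.
  intros Hm. induction N as [|N IH]; intros H.
  - exists 1. split; [lra|]. intros; lia.
  - destruct IH as [d1 [Hd1 P1]]; [intros j Hj; apply H; lia|].
    destruct (H N ltac:(lia)) as [d2 [Hd2 P2]].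
    exists (Rmin d1 d2). split; [apply Rmin_pos; auto|].
    pose proof (Rmin_l d1 d2). pose proof (Rmin_r d1 d2). pose proof (Rmin_pos d1 d2 Hd1 Hd2).
    intros j Hj. destruct (Nat.eq_dec j N) as [->|Hne].
    + apply (Hm N d2); auto; lra.
    + apply (Hm j d1); [lra|]. apply P1. lia.
Qed.

Lemma lim_right_ext a b g h L : (forall x, a < x <= b -> g x = h x) ->
  lim_right_at a b g L -> lim_right_at a b h L.
Proof.
  intros E H eps He. destruct (H eps He) as [d [Hd Hy]]. exists d; split; auto.
  intros x Hx Hxb. rewrite <- E by lra. auto.
Qed.

Lemma lim_left_ext a b g h L : (forall x, a <= x < b -> g x = h x) ->
  lim_left_at a b g L -> lim_left_at a b h L.
Proof.
  intros E H eps He. destruct (H eps He) as [d [Hd Hy]]. exists d; split; auto.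
  intros x Hx Hxa. rewrite <- E by lra. auto.
Qed.

Section BernsteinBasis.

Variables (k : Kfield) (a b : R) (m : nat) (V : (R -> Kt k) -> Prop) (p : nat -> R -> R).
Hypothesis Hab : a < b.
Hypothesis Hbasis : bernstein_basis k a b m V (Kfam k p).
Hypothesis Hnonneg : locally_nonneg a b m p.

Lemma bernstein_tower_left j : (j <= m)%nat ->
  exists D, tower a b m D /\ (forall x, a <= x <= b -> D O x = p j x) /\
    flat_at D a j /\ D j a <> 0 /\ nonneg_near_left a b (D O).
Proof.
  intros Hj. destruct Hnonneg as [d [Hd Hnn]].
  destruct (tower_of_zero_order k a b m (p j) a j Hab ltac:(lra) (proj1 (proj2 (Hbasis j Hj))))
    as [D [HD [E [Hflat Hnz]]]].
  exists D. repeat (split; [assumption|]). exists d. split; [exact Hd|].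
  intros x Hx Hxb. rewrite E by lra. apply Hnn; auto; lra.
Qed.

Lemma bernstein_tower_right j : (j <= m)%nat ->
  exists D, tower a b m D /\ (forall x, a <= x <= b -> D O x = p j x) /\
    flat_at D b (m - j) /\ D (m - j)%nat b <> 0 /\ nonneg_near_right a b (D O).
Proof.
  intros Hj. destruct Hnonneg as [d [Hd Hnn]].
  destruct (tower_of_zero_order k a b m (p j) b (m - j) Hab ltac:(lra)
              (proj2 (proj2 (Hbasis j Hj)))) as [D [HD [E [Hflat Hnz]]]].
  exists D. repeat (split; [assumption|]). exists d. split; [exact Hd|].
  intros x Hx Hxa. rewrite E by lra. apply Hnn; auto; lra.
Qed.

Lemma bernstein_deriv_pos_left j : (1 <= j <= m)%nat -> exists del, 0 < del /\
  forall x, a < x <= a + del -> x <= b -> forall d, deriv_within KR a b (p j) x d -> 0 < d.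
Proof.
  intros Hj. destruct (bernstein_tower_left j ltac:(lia)) as [D [HD [E [Hflat [Hnz Hnn]]]]].
  destruct (tower_pos_near_left a b m D j Hab HD ltac:(lia) Hflat Hnz Hnn) as [del [Hdel S]].
  exists del. split; auto. intros x Hx Hxb d Hd.
  rewrite (deriv_within_tower a b m D (p j) x d Hab ltac:(lia) HD E ltac:(lra) Hd).
  apply S; auto; lia.
Qed.

Lemma bernstein_deriv_neg_right j : (j < m)%nat -> exists del, 0 < del /\
  forall x, b - del <= x < b -> a <= x -> forall d, deriv_within KR a b (p j) x d -> d < 0.
Proof.
  intros Hj. destruct (bernstein_tower_right j ltac:(lia)) as [D [HD [E [Hflat [Hnz Hnn]]]]].
  destruct (tower_pos_near_right a b m D (m - j) Hab HD ltac:(lia) Hflat Hnz Hnn) as [del [Hdel S]].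
  exists del. split; auto. intros x Hx Hxa d Hd.
  rewrite (deriv_within_tower a b m D (p j) x d Hab ltac:(lia) HD E ltac:(lra) Hd).
  specialize (S 1%nat ltac:(lia) x Hx). simpl in S. lra.
Qed.

Lemma bernstein_deriv_sign : exists del, 0 < del /\
  (forall j, (j < m)%nat -> forall x, b - del <= x < b -> a <= x ->
     forall d, deriv_within KR a b (p j) x d -> d < 0) /\
  (forall j, (1 <= j <= m)%nat -> forall x, a < x <= a + del -> x <= b ->
     forall d, deriv_within KR a b (p j) x d -> 0 < d).
Proof.
  destruct (uniform_radius m (fun j del =>
      (forall x, b - del <= x < b -> a <= x ->
         forall d, deriv_within KR a b (p j) x d -> d < 0) /\
      (forall x, a < x <= a + del -> x <= b ->
         forall d, deriv_within KR a b (p (S j)) x d -> 0 < d))) as [del [Hdel H]].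
  - intros j d d' Hd [H1 H2]. split; intros x Hx; [apply H1|apply H2]; lra.
  - intros j Hj.
    destruct (bernstein_deriv_neg_right j Hj) as [d1 [Hd1 H1]].
    destruct (bernstein_deriv_pos_left (S j) ltac:(lia)) as [d2 [Hd2 H2]].
    exists (Rmin d1 d2). pose proof (Rmin_l d1 d2). pose proof (Rmin_r d1 d2).
    split; [apply Rmin_pos; auto|]. split; intros x Hx; [apply H1|apply H2]; lra.
  - exists del. split; auto. split.
    + intros j Hj. apply H; auto.
    + intros [|j] Hj; [lia|]. apply H. lia.
Qed.

End BernsteinBasis.

Lemma bernstein_ratio_lim_left k a b m U V (p q : nat -> R -> R) j (dp : R -> R) : a < b ->
  bernstein_basis k a b m U (Kfam k p) -> locally_nonneg a b m p ->
  bernstein_basis k a b (m - 1) V (Kfam k q) -> locally_nonneg a b (m - 1) q ->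
  (1 <= j <= m)%nat -> (forall x, a <= x <= b -> deriv_within KR a b (p j) x (dp x)) ->
  exists L, lim_right_at a b (fun x => dp x / q (j - 1)%nat x) L /\ 0 < L.
Proof.
  intros Hab Hp Hpn Hq Hqn Hj Hdp.
  destruct m as [|m]; [lia|]. replace (S m - 1)%nat with m in Hq, Hqn by lia.
  destruct (bernstein_tower_left k a b (S m) U p Hab Hp Hpn j ltac:(lia))
    as [D [HD [ED [FD [ND PD]]]]].
  destruct (bernstein_tower_left k a b m V q Hab Hq Hqn (j - 1) ltac:(lia))
    as [Q [HQ [EQ [FQ [NQ PQ]]]]].
  assert (HDj := tower_lead_pos_left a b (S m) D j Hab HD ltac:(lia) FD ND PD).
  assert (HQj := tower_lead_pos_left a b m Q (j - 1) Hab HQ ltac:(lia) FQ NQ PQ).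
  exists (D j a / Q (j - 1)%nat a). split; [|apply Rdiv_lt_0_compat; auto].
  apply (lim_right_ext a b (fun x => D 1%nat x / Q O x)).
  { intros x Hx. rewrite EQ by lra.
    rewrite (deriv_within_tower a b (S m) D (p j) x (dp x) Hab ltac:(lia) HD ED
                ltac:(lra) (Hdp x ltac:(lra))).
    reflexivity. }
  replace j with (S (j - 1)) at 1 by lia.
  apply (tower_ratio_lim_left a b m m (fun i => D (S i)) Q (j - 1));
    auto using tower_shift; try lia.
  intros i Hi. apply FD. lia.
Qed.

Lemma bernstein_ratio_lim_right k a b m U V (p q : nat -> R -> R) j (dp : R -> R) : a < b ->
  bernstein_basis k a b m U (Kfam k p) -> locally_nonneg a b m p ->
  bernstein_basis k a b (m - 1) V (Kfam k q) -> locally_nonneg a b (m - 1) q ->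
  (j < m)%nat -> (forall x, a <= x <= b -> deriv_within KR a b (p j) x (dp x)) ->
  exists L, lim_left_at a b (fun x => dp x / q j x) L /\ L < 0.
Proof.
  intros Hab Hp Hpn Hq Hqn Hj Hdp.
  destruct m as [|m]; [lia|]. replace (S m - 1)%nat with m in Hq, Hqn by lia.
  destruct (bernstein_tower_right k a b (S m) U p Hab Hp Hpn j ltac:(lia))
    as [D [HD [ED [FD [ND PD]]]]].
  destruct (bernstein_tower_right k a b m V q Hab Hq Hqn j ltac:(lia))
    as [Q [HQ [EQ [FQ [NQ PQ]]]]].
  assert (Er : (S m - j)%nat = S (m - j)) by lia. rewrite Er in FD, ND.
  assert (HDj := tower_lead_pos_right a b (S m) D (S (m - j)) Hab HD ltac:(lia) FD ND PD).
  assert (HQj := tower_lead_pos_right a b m Q (m - j) Hab HQ ltac:(lia) FQ NQ PQ).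
  exists (D (S (m - j)) b / Q (m - j)%nat b). split.
  - apply (lim_left_ext a b (fun x => D 1%nat x / Q O x)).
    { intros x Hx. rewrite EQ by lra.
      rewrite (deriv_within_tower a b (S m) D (p j) x (dp x) Hab ltac:(lia) HD ED
                 ltac:(lra) (Hdp x ltac:(lra))).
      reflexivity. }
    apply (tower_ratio_lim_right a b m m (fun i => D (S i)) Q (m - j));
      auto using tower_shift; try lia.
    intros i Hi. apply FD. lia.
  - set (s := (-1) ^ (m - j)) in *. simpl in HDj. fold s in HDj.
    assert (Hs : s <> 0) by (apply pow_nonzero; lra).
    assert (Hr := Rdiv_lt_0_compat _ _ HDj HQj).
    replace (-1 * s * D (S (m - j)) b / (s * Q (m - j)%nat b))
      with (- (D (S (m - j)) b / Q (m - j)%nat b)) in Hr by (field; auto).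
    lra.
Qed.

Theorem lemma6 (k : Kfield) (a b : R) (n : nat) (U : (R -> Kt k) -> Prop)
    (pt : nat -> R -> R) :
  a < b ->
  subspace_Cn k a b n U ->
  has_dim k a b U (S n) ->
  bernstein_basis k a b n U (Kfam k pt) ->
  locally_nonneg a b n pt ->
  (exists del, 0 < del /\
     (forall j, (j < n)%nat -> forall x, b - del <= x < b -> a <= x ->
        forall d, deriv_within KR a b (pt j) x d -> d < 0) /\
     (forall j, (1 <= j <= n)%nat -> forall x, a < x <= a + del -> x <= b ->
        forall d, deriv_within KR a b (pt j) x d -> 0 < d)) /\
  (forall (f0t : R -> R) (qt : nat -> R -> R),
     in_sp k a b U (fun x => KofR k (f0t x)) ->
     (forall x, a <= x <= b -> 0 < f0t x) ->
     bernstein_basis k a b (n - 1) (Dspace k a b U f0t) (Kfam k qt) ->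
     locally_nonneg a b (n - 1) qt ->
     (forall j, (1 <= j <= n)%nat -> forall dp : R -> R,
        (forall x, a <= x <= b -> deriv_within KR a b (pt j) x (dp x)) ->
        exists L, lim_right_at a b (fun x => dp x / qt (j - 1)%nat x) L /\
                  0 < L / f0t a) /\
     (forall j, (j < n)%nat -> forall dp : R -> R,
        (forall x, a <= x <= b -> deriv_within KR a b (pt j) x (dp x)) ->
        exists L, lim_left_at a b (fun x => dp x / qt j x) L /\
                  L / f0t b < 0)).
Proof.
  intros Hab _ _ Hp Hpn. split; [exact (bernstein_deriv_sign k a b n U pt Hab Hp Hpn)|].
  intros f0t qt _ Hf0 Hq Hqn.
  assert (Hfa : 0 < f0t a) by (apply Hf0; lra).
  assert (Hfb : 0 < f0t b) by (apply Hf0; lra).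
  split; intros j Hj dp Hdp.
  - destruct (bernstein_ratio_lim_left k a b n U _ pt qt j dp Hab Hp Hpn Hq Hqn Hj Hdp)
      as [L [HL HLpos]].
    exists L. split; auto. apply Rdiv_lt_0_compat; auto.
  - destruct (bernstein_ratio_lim_right k a b n U _ pt qt j dp Hab Hp Hpn Hq Hqn Hj Hdp)
      as [L [HL HLneg]].
    exists L. split; auto. unfold Rdiv. apply Rmult_neg_pos; auto. apply Rinv_0_lt_compat; auto.
Qed.
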